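(* Consider the two-dimensional map defined below with heterogeneity in speculative trading strategies, i.e. $w^F\neq 0$ and $w^C\neq 0$. Then, in addition to the equilibrium $P_1=(-\Omega\Delta y^{BP},\Delta y^{BP})$, the map admits two additional equilibria $P_2=(\bar e_2,\Delta\bar y_2)$ and $P_3=(\bar e_3,\Delta\bar y_3)$ given by $$\bar e_{2,3}=-\Omega\Delta y^{BP}\pm\sqrt{\frac{w^C}{w^F}},\qquad \Delta\bar y_{2,3}=\Delta y^{BP}.$$
   Context: The state variables are the (log) exchange rate $e_t$ and the output growth rate $\Delta y_t$, evolving according to the map $$e_t=e_{t-1}+(\mu+\rho)\left[w^F\left(-\Omega\Delta y_{t-1}-e_{t-1}\right)^3+w^C\left(e_{t-1}+\Omega\Delta y_{t-1}\right)\right],$$ $$\Delta y_t=\Delta y_{t-1}+w^{flex}\beta\left\{\Delta y^{BP}-\gamma\left[w^F\left(-\Omega\Delta y_{t-1}-e_{t-1}\right)^3+w^C\left(e_{t-1}+\Omega\Delta y_{t-1}\right)\right]-\Delta y_{t-1}\right\},$$ where $\mu>0$, $\rho>0$, $0<\beta<1$, $0<\Omega<1$, $0<w^{flex}<1$, $\Delta y^{BP}\in\mathbb{R}$ is a constant, $\gamma=\frac{(1-\theta)(\mu+\rho)}{\theta\pi}>0$ with $\theta\in(0,1)$, $\pi>0$, and $w^F,w^C\in(0,1)$ are the shares of fundamentalists and chartists with $w^F+w^C=1$. An equilibrium is a fixed point $(\bar e,\Delta\bar y)$ of this map. *)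

From Stdlib Require Import Reals Lra.
Open Scope R_scope.

Definition gamma_coef (theta piP mu rho : R) : R :=
  (1 - theta) * (mu + rho) / (theta * piP).

Definition spec_term (wF wC Omega e dy : R) : R :=
  wF * (- Omega * dy - e) ^ 3 + wC * (e + Omega * dy).

Definition exch_map (mu rho beta Omega wflex dyBP theta piP wF wC : R)
  (p : R * R) : R * R :=
  let e := fst p in
  let dy := snd p in
  (e + (mu + rho) * spec_term wF wC Omega e dy,
   dy + wflex * beta * (dyBP - gamma_coef theta piP mu rho
                               * spec_term wF wC Omega e dy - dy)).

Definition is_equilibrium (mu rho beta Omega wflex dyBP theta piP wF wC : R)
  (p : R * R) : Prop :=
  exch_map mu rho beta Omega wflex dyBP theta piP wF wC p = p.

From Stdlib Require Import Reals Lra Psatz.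
Open Scope R_scope.

(* At a fixed point the first coordinate forces the speculative term to vanish,
   and then the second coordinate forces [dy = dyBP].  In the shifted variable
   [x = e + Omega dy] the speculative term is the odd cubic [x (wC - wF x^2)],
   whose roots are [0] and [± sqrt (wC / wF)]. *)

Lemma spec_term_shift (wF wC Omega e dy : R) :
  spec_term wF wC Omega e dy =
  (e + Omega * dy) * (wC - wF * (e + Omega * dy) ^ 2).
Proof. unfold spec_term; ring. Qed.

Lemma odd_cubic_eq0 (a b x : R) : 0 < a -> 0 <= b ->
  x * (b - a * x ^ 2) = 0 <->
  x = 0 \/ x = sqrt (b / a) \/ x = - sqrt (b / a).
Proof.
  intros Ha Hb.
  set (s := sqrt (b / a)).
  assert (Hss : a * (s * s) = b).
  { assert (Hba : 0 <= b / a)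
      by (apply Rmult_le_pos; [lra | apply Rlt_le, Rinv_0_lt_compat; lra]).
    unfold s; rewrite sqrt_sqrt by exact Hba; field; lra. }
  assert (Hfactor : x * (b - a * x ^ 2) = a * (x * ((s - x) * (s + x)))).
  { rewrite <- Hss; ring. }
  rewrite Hfactor; split.
  - intro H0.
    destruct (Rmult_integral _ _ H0) as [Ha0 | Hx]; [lra |].
    destruct (Rmult_integral _ _ Hx) as [-> | Hsx]; [now left |].
    destruct (Rmult_integral _ _ Hsx); [right; left | right; right]; lra.
  - intros [-> | [-> | ->]]; ring.
Qed.

Lemma is_equilibrium_iff (mu rho beta Omega wflex dyBP theta piP wF wC e dy : R) :
  mu + rho <> 0 -> wflex * beta <> 0 ->
  is_equilibrium mu rho beta Omega wflex dyBP theta piP wF wC (e, dy) <->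
  spec_term wF wC Omega e dy = 0 /\ dy = dyBP.
Proof.
  intros Hmurho Hspeed.
  unfold is_equilibrium, exch_map; cbn [fst snd].
  set (S := spec_term wF wC Omega e dy).
  split.
  - intro Hfix.
    injection Hfix as He Hdy.
    assert (HS : S = 0).
    { assert (Hm : (mu + rho) * S = 0) by lra.
      destruct (Rmult_integral _ _ Hm); [contradiction | assumption]. }
    rewrite HS, Rmult_0_r in Hdy.
    assert (Hm : wflex * beta * (dyBP - dy) = 0) by lra.
    destruct (Rmult_integral _ _ Hm); [contradiction | lra].
  - intros [-> ->].
    f_equal; ring.
Qed.

Theorem proposition2
  (mu rho beta Omega wflex dyBP theta piP wF wC : R)
  (Hmu : 0 < mu) (Hrho : 0 < rho)
  (Hbeta : 0 < beta < 1) (HOmega : 0 < Omega < 1)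
  (Hwflex : 0 < wflex < 1)
  (Htheta : 0 < theta < 1) (Hpi : 0 < piP)
  (HwF : 0 < wF < 1) (HwC : 0 < wC < 1) (Hsum : wF + wC = 1) :
  let P1 := (- Omega * dyBP, dyBP) in
  let P2 := (- Omega * dyBP + sqrt (wC / wF), dyBP) in
  let P3 := (- Omega * dyBP - sqrt (wC / wF), dyBP) in
  P1 <> P2 /\ P1 <> P3 /\ P2 <> P3 /\
  (forall p : R * R,
     is_equilibrium mu rho beta Omega wflex dyBP theta piP wF wC p <->
     (p = P1 \/ p = P2 \/ p = P3)).
Proof.
  intros P1 P2 P3; unfold P1, P2, P3.
  assert (Hs : 0 < sqrt (wC / wF)) by (apply sqrt_lt_R0, Rdiv_lt_0_compat; lra).
  split; [intro H; injection H; lra |].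
  split; [intro H; injection H; lra |].
  split; [intro H; injection H; lra |].
  intros [e dy].
  rewrite is_equilibrium_iff by nra.
  rewrite spec_term_shift, odd_cubic_eq0 by lra.
  split.
  - intros [Hroot ->].
    destruct Hroot as [H | [H | H]]; [left | right; left | right; right];
      f_equal; lra.
  - intros [H | [H | H]]; injection H as -> ->; split; auto; lra.
Qed.
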